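(* Let $\mathcal{J}_1$ and $\mathcal{J}_2$ be two disjoint sets of jobs, let $S_1$ be a feasible schedule for $\mathcal{J}_1$ and $S_2$ a feasible schedule for $\mathcal{J}_2$. Let $S := S_1 + S_2$ be the schedule for $\mathcal{J}_1\cup\mathcal{J}_2$ which at every time $t$ processes each job $j\in\mathcal{J}_1$ at speed $s_{1,j}(t)$ and each job $j\in\mathcal{J}_2$ at speed $s_{2,j}(t)$ (so the total speed is $s(t)=s_1(t)+s_2(t)$). Then $$\mathrm{cost}(S,\mathcal{J}_1\cup\mathcal{J}_2)\le\Big(\mathrm{cost}(S_1,\mathcal{J}_1)^{1/\alpha}+\mathrm{cost}(S_2,\mathcal{J}_2)^{1/\alpha}\Big)^{\alpha}.$$
   Context: General Energy-efficient Scheduling (GES) setting. There is a single machine. A job is a tuple $(j,r_j,p_j)$ (possibly with further parameters such as a weight $v_j>0$ or a deadline $d_j$) consisting of an identifier $j$, a release time $r_j\ge 0$ and a processing time $p_j>0$. A feasible schedule $S$ for a job set $\mathcal{J}$ is a family of nonnegative measurable functions $\{s_j(t)\}_{j\in\mathcal{J},t\ge0}$ with $s_j(t)=0$ for $t<r_j$ and $\int_{r_j}^\infty s_j(t)\,dt=p_j$; its total speed is $s(t)=\sum_j s_j(t)$. The energy is $E(S)=\int_{t\ge0}s(t)^\alpha\,dt$ for a fixed constant $\alpha>1$. The work profile of job $j$ is $w_j^S(t)=p_j-\int_{r_j}^t s_j(u)\,du$ for $t\ge r_j$. The quality cost $F(S,\mathcal{J})=f\big((W^S_j,j)_{j\in\mathcal{J}}\big)$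 is a real-valued function depending only on the work profiles $W_j^S=\{w_j^S(t)\}_{t\ge r_j}$ of the jobs in $\mathcal{J}$ and on their parameters (so for $\mathcal{J}'\subseteq\mathcal{J}$, $F(S,\mathcal{J}')$ is $f$ evaluated on the work profiles of the jobs of $\mathcal{J}'$). $F$ is assumed subadditive: $F(S,\mathcal{J}_1\cup\mathcal{J}_2)\le F(S,\mathcal{J}_1)+F(S,\mathcal{J}_2)$, and monotone: if $w^S_j(t)\le w^{S'}_j(t)$ for all $j\in\mathcal{J}$ and $t\ge r_j$ then $F(S,\mathcal{J})\le F(S',\mathcal{J})$. The objective is $\mathrm{cost}(S,\mathcal{J})=E(S)+F(S,\mathcal{J})$. *)

From HB Require Import structures.
From mathcomp Require Import all_boot all_order all_algebra.
From mathcomp Require Import all_classical all_reals all_analysis.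
Set Implicit Arguments. Unset Strict Implicit. Unset Printing Implicit Defensive.
Import Order.TTheory GRing.Theory Num.Theory.
Local Open Scope classical_set_scope.
Local Open Scope ring_scope.

(* Job identifiers range over a finite type J; a job j has release time r j
   and processing time p j (further parameters are encoded in the identifier,
   on which the quality cost F may depend arbitrarily).
   A schedule is a family of speed functions s : J -> R -> R; a schedule
   "for the job set A" processes only jobs of A (s j = 0 for j \notin A). *)

Definition total_speed (R : realType) (J : finType) (s : J -> R -> R)
  (A : {set J}) (t : R) : R := \sum_(j in A) s j t.

Definition energy (R : realType) (J : finType) (alpha : R) (s : J -> R -> R)
  (A : {set J}) : \bar R :=
  (\int[@lebesgue_measure R]_(t in `[0%R, +oo[) ((total_speed s A t) `^ alpha)%:E)%E.

(* work profile w_j(t) = p_j - int_{r_j}^t s_j(u) du  (meaningful for t >= r_j) *)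
Definition work_profile (R : realType) (J : finType) (r p : J -> R)
  (s : J -> R -> R) (j : J) (t : R) : R :=
  p j - fine (\int[@lebesgue_measure R]_(u in `[r j, t]) (s j u)%:E)%E.

Definition feasible (R : realType) (J : finType) (r p : J -> R)
  (s : J -> R -> R) (A : {set J}) : Prop :=
  forall j : J,
    (j \in A ->
       measurable_fun setT (s j)
       /\ (forall t, 0 <= s j t)
       /\ (forall t, t < r j -> s j t = 0)
       /\ (\int[@lebesgue_measure R]_(t in `[r j, +oo[) (s j t)%:E)%E = (p j)%:E)
    /\ (j \notin A -> forall t, s j t = 0).

(* F(S, A) = f((W_j^S, j)_{j in A}): F takes the work-profile family and the job set. *)
Definition quality_cost (R : realType) (J : finType) (r : J -> R)
  (F : (J -> R -> R) -> {set J} -> R) : Prop :=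
  (forall (w w' : J -> R -> R) (A : {set J}),
      (forall j, j \in A -> forall t, r j <= t -> w j t = w' j t) ->
      F w A = F w' A)
  /\ (forall (w : J -> R -> R) (A B : {set J}), F w (A :|: B) <= F w A + F w B)
  /\ (forall (w w' : J -> R -> R) (A : {set J}),
      (forall j, j \in A -> forall t, r j <= t -> w j t <= w' j t) ->
      F w A <= F w' A)
  (* nonnegative (needed for cost^(1/alpha) to make sense) *)
  /\ (forall (w : J -> R -> R) (A : {set J}), 0 <= F w A).

Definition cost (R : realType) (J : finType) (alpha : R) (r p : J -> R)
  (F : (J -> R -> R) -> {set J} -> R) (s : J -> R -> R) (A : {set J}) : \bar R :=
  (energy alpha s A + (F (work_profile r p s) A)%:E)%E.

Definition sched_add (R : realType) (J : finType) (s1 s2 : J -> R -> R) :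
  J -> R -> R := fun j t => s1 j t + s2 j t.

From HB Require Import structures.
From mathcomp Require Import all_boot all_order all_algebra.
From mathcomp Require Import all_classical all_reals all_analysis.
Import Order.TTheory GRing.Theory Num.Theory.
Local Open Scope ring_scope.

(* Since the total speed of a feasible schedule vanishes before time 0, the
   energy is E(S) = N(S)^alpha with N(S) the L^alpha norm of the total speed,
   and Minkowski's inequality gives N(S1 + S2) <= N(S1) + N(S2).  Disjointness
   makes S1 + S2 coincide with S_i on the jobs of J_i, so the quality cost is
   subadditive: F(S1 + S2, J1 u J2) <= F(S1, J1) + F(S2, J2).  It remains to
   see that (n1 + n2)^alpha + f1 + f2 <= ((n1^alpha + f1)^(1/alpha)
   + (n2^alpha + f2)^(1/alpha))^alpha, which is Minkowski's inequality in
   l^alpha for the two vectors (n1, f1^(1/alpha)) and (n2, f2^(1/alpha)). *)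

Section two_point_minkowski.
Context {R : realType}.

Definition seq2 (a b : R) (n : nat) : R :=
  match n with 0%N => a | 1%N => b | _ => 0 end.

Lemma Lnorm_counting_seq2 (a b p : R) : 0 <= a -> 0 <= b -> 0 < p ->
  ('N[@counting nat R]_p%:E[EFin \o seq2 a b] = ((a `^ p + b `^ p) `^ p^-1)%:E)%E.
Proof.
move=> a0 b0 p0; rewrite Lnorm_counting//.
rewrite (nneseries_split 0 2); last by move=> k; rewrite poweR_ge0.
rewrite add0n ereal_series_cond eseries0 ?adde0; last first.
  by move=> [//|] [//|n _]; rewrite /= normr0 powR0// gt_eqF.
rewrite big_mkord 2!big_ord_recr/= big_ord0 add0e.
by rewrite !ger0_norm// -EFinD poweR_EFin.
Qed.

Lemma minkowski2 (a1 a2 b1 b2 p : R) :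
  0 <= a1 -> 0 <= a2 -> 0 <= b1 -> 0 <= b2 -> 1 <= p ->
  ((a1 + b1) `^ p + (a2 + b2) `^ p) `^ p^-1 <=
  (a1 `^ p + a2 `^ p) `^ p^-1 + (b1 `^ p + b2 `^ p) `^ p^-1.
Proof.
move=> a10 a20 b10 b20 p1; have p0 : 0 < p by apply: lt_le_trans p1.
have mseq2 a b : measurable_fun setT (seq2 a b) by [].
have := minkowski_EFin (@counting nat R) (mseq2 a1 a2) (mseq2 b1 b2) p1.
have -> : (seq2 a1 a2 \+ seq2 b1 b2)%R = seq2 (a1 + b1) (a2 + b2).
  by apply/funext => -[|[|n]] /=; rewrite ?addr0.
by rewrite !Lnorm_counting_seq2 ?addr_ge0// -EFinD lee_fin.
Qed.

Lemma powRVK (x a : R) : 0 <= x -> a != 0 -> (x `^ a^-1) `^ a = x.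
Proof. by move=> x0 a0; rewrite -powRrM mulVf// powRr1. Qed.

Lemma powR_superadditive (x y p : R) : 0 <= x -> 0 <= y -> 1 <= p ->
  x `^ p + y `^ p <= (x + y) `^ p.
Proof.
move=> x0 y0 p1; have p0 : 0 < p by apply: lt_le_trans p1.
have := minkowski2 _ _ _ _ _ x0 (lexx 0) (lexx 0) y0 p1.
rewrite !addr0 !add0r powR0 ?gt_eqF// addr0 add0r => h.
rewrite -[x `^ p + y `^ p](@powRVK _ p) ?addr_ge0 ?powR_ge0 ?gt_eqF//.
rewrite -!powRrM !mulfV ?gt_eqF// !powRr1// in h.
by apply: ge0_ler_powR h; rewrite ?nnegrE ?addr_ge0 ?powR_ge0 ?(ltW p0).
Qed.

Lemma minkowski2_shift (n1 n2 f1 f2 a : R) :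
  0 <= n1 -> 0 <= n2 -> 0 <= f1 -> 0 <= f2 -> 1 <= a ->
  (n1 + n2) `^ a + (f1 + f2) <=
  ((n1 `^ a + f1) `^ a^-1 + (n2 `^ a + f2) `^ a^-1) `^ a.
Proof.
move=> n10 n20 f10 f20 a1; have a0 : 0 < a by apply: lt_le_trans a1.
have gK f : 0 <= f -> (f `^ a^-1) `^ a = f by move=> f0; rewrite powRVK ?gt_eqF.
have := minkowski2 _ _ _ _ _ n10 (powR_ge0 f1 a^-1) n20 (powR_ge0 f2 a^-1) a1.
rewrite !gK// => mink.
set g1 := f1 `^ a^-1; set g2 := f2 `^ a^-1.
apply: (@le_trans _ _ ((n1 + n2) `^ a + (g1 + g2) `^ a)).
  by rewrite lerD2l -{1}(gK f1)// -{1}(gK f2)// powR_superadditive ?powR_ge0.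
rewrite -[leLHS](@powRVK _ a) ?addr_ge0 ?powR_ge0 ?gt_eqF//.
by apply: ge0_ler_powR mink; rewrite ?nnegrE ?addr_ge0 ?powR_ge0 ?(ltW a0).
Qed.

Local Open Scope ereal_scope.

Lemma ereal_minkowski2_shift (N N1 N2 : \bar R) (f f1 f2 a : R) :
  0 <= N -> 0 <= N1 -> 0 <= N2 -> (0 <= f1)%R -> (0 <= f2)%R -> (1 < a)%R ->
  N <= N1 + N2 -> (f <= f1 + f2)%R ->
  N `^ a + f%:E <= ((N1 `^ a + f1%:E) `^ a^-1 + (N2 `^ a + f2%:E) `^ a^-1) `^ a.
Proof.
move=> N0 N10 N20 f10 f20 a1 NN ff.
have a0 : (0 < a)%R by apply: lt_trans a1.
have a_neq0 : a != 0%R by rewrite gt_eqF.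
case: N1 N10 NN => [n1| |] //; last first.
  move=> _ _; rewrite poweRyr// addye// poweRyr ?invr_eq0// addye ?poweRyr ?leey//.
  by rewrite gt_eqF// (lt_le_trans _ (poweR_ge0 _ _)).
case: N2 N20 => [n2| |] //; last first.
  move=> _ _ _; rewrite poweRyr// addye// poweRyr ?invr_eq0// addey ?poweRyr ?leey//.
case: N N0 => [n| |] //; rewrite !lee_fin => n0 n20 n10 nn.
apply: le_trans (minkowski2_shift _ _ _ _ _ n10 n20 f10 f20 (ltW a1)).
by rewrite lerD// ge0_ler_powR ?nnegrE ?addr_ge0 ?(ltW a0).
Qed.

End two_point_minkowski.

Section schedules.
Context {R : realType} {J : finType} {r p : J -> R}.
Implicit Types (s : J -> R -> R) (A : {set J}).
Local Notation "'N_ p [ f ]" := (Lnorm (@lebesgue_measure R) p (EFin \o f)).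

Lemma feasible_out {s A j} : feasible r p s A -> j \notin A -> s j = fun=> 0.
Proof. by move=> fs jA; apply/funext => t; apply: (proj2 (fs j)). Qed.

Lemma sched_add_outr s1 s2 j : s2 j = (fun=> 0) -> sched_add s1 s2 j = s1 j.
Proof. by move=> s2j; apply/funext => t; rewrite /sched_add s2j addr0. Qed.

Lemma sched_add_outl s1 s2 j : s1 j = (fun=> 0) -> sched_add s1 s2 j = s2 j.
Proof. by move=> s1j; apply/funext => t; rewrite /sched_add s1j add0r. Qed.

Lemma feasible_sched_add {s1 s2} {J1 J2 : {set J}} : [disjoint J1 & J2] ->
  feasible r p s1 J1 -> feasible r p s2 J2 ->
  feasible r p (sched_add s1 s2) (J1 :|: J2).
Proof.
move=> dis f1 f2 j; rewrite !inE.
have [jJ1|jNJ1] := boolP (j \in J1).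
  have s2j : s2 j = fun=> 0.
    by apply: feasible_out f2 _; rewrite (disjointFr dis jJ1).
  by rewrite sched_add_outr //; split=> // _; exact: (proj1 (f1 j)).
rewrite sched_add_outl /=; last exact: feasible_out f1 jNJ1.
by split=> [jJ2|jNJ2]; [exact: (proj1 (f2 j))|rewrite (feasible_out f2 jNJ2)].
Qed.

Lemma total_speed_ge0 s A t : feasible r p s A -> 0 <= total_speed s A t.
Proof. by move=> fs; apply: sumr_ge0 => j jA; have [_ [->]] := proj1 (fs j) jA. Qed.

Lemma total_speed_lt0 s A t : (forall j, 0 <= r j) -> feasible r p s A ->
  t < 0 -> total_speed s A t = 0.
Proof.
move=> r0 fs t0; apply: big1 => j jA; have [_ [_ [-> //]]] := proj1 (fs j) jA.
exact: lt_le_trans t0 (r0 j).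
Qed.

Lemma measurable_total_speed s A : feasible r p s A ->
  measurable_fun setT (total_speed s A).
Proof.
move=> fs; rewrite /total_speed; under eq_fun do rewrite big_mkcond /=.
apply: measurable_sum => j; have [jA|_] := boolP (j \in A); last exact: measurable_cst.
exact: (proj1 (proj1 (fs j) jA)).
Qed.

Lemma total_speed_sched_add {s1 s2} {J1 J2 : {set J}} : [disjoint J1 & J2] ->
  feasible r p s1 J1 -> feasible r p s2 J2 ->
  total_speed (sched_add s1 s2) (J1 :|: J2) =
  (total_speed s1 J1 \+ total_speed s2 J2)%R.
Proof.
move=> dis f1 f2; apply/funext => t; rewrite /total_speed.
rewrite (eq_bigl [predU J1 & J2]); last by move=> j; rewrite !inE.
rewrite bigU //= !big_split /= [\sum_(j in J1) s2 j t]big1; last first.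
  by move=> j jJ1; rewrite (feasible_out f2) // (disjointFr dis jJ1).
rewrite [\sum_(j in J2) s1 j t]big1 ?addr0 ?add0r // => j jJ2.
by rewrite (feasible_out f1) // (disjointFl dis jJ2).
Qed.

Lemma energy_feasible {alpha : R} {s A} : alpha != 0 -> (forall j, 0 <= r j) ->
  feasible r p s A ->
  energy alpha s A = ('N_alpha%:E[total_speed s A] `^ alpha)%E.
Proof.
move=> a0 r0 fs; rewrite /energy integral_mkcond poweR_Lnorm //.
apply: eq_integral => t _; rewrite patchE /= ger0_norm ?total_speed_ge0 //.
case: ifPn => // tNge0; rewrite total_speed_lt0 ?powR0 //.
by rewrite ltNge; apply: contra tNge0 => t0; rewrite inE /= in_itv /= t0.
Qed.

Lemma quality_cost_sched_add F s1 s2 (J1 J2 : {set J}) : quality_cost r F ->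
  [disjoint J1 & J2] -> feasible r p s1 J1 -> feasible r p s2 J2 ->
  F (work_profile r p (sched_add s1 s2)) (J1 :|: J2) <=
  F (work_profile r p s1) J1 + F (work_profile r p s2) J2.
Proof.
move=> [Flocal [Fsub _]] dis f1 f2; apply: le_trans (Fsub _ J1 J2) _.
apply: lerD; [rewrite (Flocal _ (work_profile r p s1))|
              rewrite (Flocal _ (work_profile r p s2))] => // j jJ t _.
  by rewrite /work_profile sched_add_outr // (feasible_out f2) // (disjointFr dis jJ).
by rewrite /work_profile sched_add_outl // (feasible_out f1) // (disjointFl dis jJ).
Qed.

End schedules.

Theorem lemma1 (R : realType) (J : finType) (alpha : R) (r p : J -> R)
  (F : (J -> R -> R) -> {set J} -> R) (J1 J2 : {set J}) (s1 s2 : J -> R -> R) :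
  1 < alpha ->
  (forall j, 0 <= r j) -> (forall j, 0 < p j) ->
  quality_cost r F ->
  [disjoint J1 & J2] ->
  feasible r p s1 J1 -> feasible r p s2 J2 ->
  (cost alpha r p F (sched_add s1 s2) (J1 :|: J2)
   <= (cost alpha r p F s1 J1 `^ alpha^-1 + cost alpha r p F s2 J2 `^ alpha^-1) `^ alpha)%E.
Proof.
move=> a1 r0 _ FQ dis f1 f2.
have a0 : alpha != 0 by rewrite gt_eqF // (lt_trans _ a1).
have f12 := feasible_sched_add dis f1 f2.
have [_ [_ [_ F_ge0]]] := FQ.
rewrite /cost (energy_feasible a0 r0 f12).
rewrite (energy_feasible a0 r0 f1) (energy_feasible a0 r0 f2).
apply: ereal_minkowski2_shift; rewrite ?Lnorm_ge0 ?F_ge0 //.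
  rewrite (total_speed_sched_add dis f1 f2).
  apply: minkowski_EFin (ltW a1).
    exact: measurable_total_speed f1.
  exact: measurable_total_speed f2.
exact: quality_cost_sched_add.
Qed.
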